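(* Let $1\le k\le N-1$ satisfy $\phi^{k-1}-\phi^k>\phi^k-\phi^{k+1}$, let $F\in\tilde{\mathcal F}^k$, let $\mathcal U$ be an unlabeled atom of $\mathfrak A_k$, and let $\mathcal X$ be the vertex set of an arbitrary weakly connected component of the induced subgraph $F|_{\mathcal U}$. Then: (1) there is a forest $H\in\tilde{\mathcal F}^k$ such that the arcs leaving the vertices of $\mathcal X$ are the same in $F$ and $H$, and no arc of $H$ enters $\mathcal X$; (2) for every $G\in\tilde{\mathcal F}^k$ one has $\Upsilon^G_{\mathcal X}=\Upsilon^F_{\mathcal X}$; moreover, if the graph $F'=F^G_{\uparrow\mathcal X}$ is a forest (in particular, if no arc of $F$ enters $\mathcal X$), then $F'\in\tilde{\mathcal F}^k$; (3) if $G$ is any spanning forest of $V$ in which every vertex of $\mathcal X$ has an outgoing arc, then $\Upsilon^G_{\mathcal X}\ge\Upsilon^F_{\mathcal X}$; and if $\Upsilon^G_{\mathcal X}=\Upsilon^F_{\mathcal X}$, then there is $F'\in\tilde{\mathcal F}^k$ such that the arcs leaving the vertices of $\mathcal X$ in $G$ and in $F'$ coincide.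
   Context: $V$ is a digraph with vertex set $\mathcal N$, $|\mathcal N|=N$, real arc weights $v_{ij}$, having at least one spanning tree. An (entering) forest is a digraph in which every vertex has at most one outgoing arc and there is no directed cycle; its weakly connected components are trees, each with a root (the unique vertex with no outgoing arc). $\mathcal F^k$ is the set of spanning forests of $V$ with exactly $k$ trees. For a subgraph $G$ and $\mathcal S\subseteq\mathcal N$, $\Upsilon^G_{\mathcal S}=\sum v_{ij}$ over arcs $(i,j)$ of $G$ with $i\in\mathcal S$, and $\Upsilon^G=\Upsilon^G_{\mathcal N}$. $\phi^k=\min_{\mathcal F^k}\Upsilon^F$, $\phi^0=\infty$; $\tilde{\mathcal F}^k$ the forests in $\mathcal F^k$ of weight $\phi^k$. $\mathfrak A_k$ is the algebra of subsets of $\mathcal N$ generated by the vertex sets of trees of forests in $\tilde{\mathcal F}^k$; atoms are its minimal nonempty elements; an atom is unlabeled if it contains no root of any forest of $\tilde{\mathcal F}^k$. $F|_{\mathcal U}$ is the induced subgraph. An arc enters $\mathcal X$ if its head is in $\mathcal X$ and tail is not. $G^F_{\uparrow\mathcal S}$ is the graph obtained from $G$ by replacing the arcs leaving the vertices of $\mathcal S$ by the arcs leaving the same vertices in $F$ (so $F^G_{\uparrow\mathcal X}$ has the arcs of $G$ at vertices of $\mathcal X$ and those of $F$ elsewhere). *)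

From HB Require Import structures.
From mathcomp Require Import all_boot all_order all_algebra.

Set Implicit Arguments.
Unset Strict Implicit.
Unset Printing Implicit Defensive.

Import Order.TTheory GRing.Theory Num.Theory.
Local Open Scope ring_scope.

(* The digraph V has vertex set T (a finType, N = #|T|), arc relation adj,
   and real arc weights v i j (only meaningful on arcs).

   A subgraph of V in which every vertex has at most one outgoing arc is
   represented by its successor function  F : {ffun T -> option T}:
   F i = Some j  iff  (i,j) is an arc of F;  F i = None  iff i has no
   outgoing arc (i is a root). *)
Definition sgraph (T : finType) := {ffun T -> option T}.

Section Defs.
Variables (T : finType) (R : realFieldType) (adj : rel T) (v : T -> T -> R).

Definition arcrel (F : sgraph T) : rel T := fun i j => F i == Some j.
Definition weakrel (F : sgraph T) : rel T :=
  fun i j => arcrel F i j || arcrel F j i.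

Definition subgraph_of_V (F : sgraph T) : bool :=
  [forall i, if F i is Some j then adj i j else true].

Definition acyclic (F : sgraph T) : bool :=
  [forall i, [forall j, arcrel F i j ==> ~~ connect (arcrel F) j i]].

Definition is_forest (F : sgraph T) : bool := subgraph_of_V F && acyclic F.

Definition ntrees (F : sgraph T) : nat := n_comp (weakrel F) T.

Definition forest_k (k : nat) (F : sgraph T) : bool :=
  is_forest F && (ntrees F == k).

Definition Ups (F : sgraph T) (S : {set T}) : R :=
  \sum_(i in S) (if F i is Some j then v i j else 0).

Definition UpsT (F : sgraph T) : R := Ups F setT.

(* min on R extended by None = +infinity *)
Definition omin (a b : option R) : option R :=
  match a, b with
  | None, x => x
  | x, None => x
  | Some x, Some y => Some (Num.min x y)
  end.

(* phi^k = min over \mathcal F^k of Upsilon^F ; None stands for +infinity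
   (the empty minimum, e.g. phi^0 = infinity) *)
Definition phi (k : nat) : option R :=
  \big[omin/None]_(F : sgraph T | forest_k k F) Some (UpsT F).

Definition tildeF (k : nat) (F : sgraph T) : bool :=
  forest_k k F && (phi k == Some (UpsT F)).

(* phi^{k-1} - phi^k > phi^k - phi^{k+1}, with phi^{k-1} = infinity allowed *)
Definition gap_cond (k : nat) : Prop :=
  match phi k.-1, phi k, phi k.+1 with
  | None, Some _, Some _ => True
  | Some a, Some b, Some c => b - c < a - b
  | _, _, _ => False
  end.

Definition tree_set (F : sgraph T) (x : T) : {set T} :=
  [set y | connect (weakrel F) x y].

Definition gen (k : nat) (A : {set T}) : Prop :=
  exists F x, tildeF k F /\ A = tree_set F x.

Definition is_algebra (S : {set {set T}}) : Prop :=
  [/\ setT \in S,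
      (forall A, A \in S -> ~: A \in S) &
      (forall A B, A \in S -> B \in S -> A :|: B \in S)].

Definition in_Ak (k : nat) (A : {set T}) : Prop :=
  forall S : {set {set T}}, is_algebra S ->
    (forall B, gen k B -> B \in S) -> A \in S.

Definition atom (k : nat) (U : {set T}) : Prop :=
  [/\ in_Ak k U, U != set0 &
      forall W, in_Ak k W -> W \subset U -> W = set0 \/ W = U].

Definition unlabeled (k : nat) (U : {set T}) : Prop :=
  forall F x, tildeF k F -> x \in U -> F x != None.

Definition indrel (F : sgraph T) (U : {set T}) : rel T :=
  fun i j => [&& i \in U, j \in U & weakrel F i j].

Definition is_component (F : sgraph T) (U X : {set T}) : Prop :=
  exists2 x, x \in U & X = [set y | connect (indrel F U) x y].

Definition enters (F : sgraph T) (X : {set T}) : Prop :=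
  exists i j, [/\ F i = Some j, j \in X & i \notin X].

Definition override (F G : sgraph T) (X : {set T}) : sgraph T :=
  [ffun i => if i \in X then G i else F i].

End Defs.

From HB Require Import structures.
From mathcomp Require Import all_boot all_order all_algebra.
From mathcomp Require Import zify lra.
Import Order.TTheory GRing.Theory Num.Theory.
Local Open Scope ring_scope.

Set Implicit Arguments.
Unset Strict Implicit.
Unset Printing Implicit Defensive.

(* The key tool is an exchange argument: for optimal k-forests P and Q and a
   vertex y, letting P use the arcs of Q on the vertices lying in the trees of y
   of both forests, and vice versa, yields two forests whose weights sum to
   2 phi^k and whose numbers of trees are k + d and k - d with |d| <= 1.  The
   gap condition (strict convexity of phi at k) forces d = 0, so both are
   optimal.  Since U is an atom, every optimal forest keeps U inside one tree,
   while any vertex outside U is separated from U by some optimal forest; the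
   exchange with that forest removes an arc entering X without touching U,
   which gives (1).  Grafting the arcs of a competitor G on X onto such a forest
   gives a forest with k trees (X contains no roots), whence (3) by optimality;
   (2) follows by comparing weights on X, on U minus X and on U. *)

Section Trees.
Variable T : finType.
Implicit Types (F P Q : sgraph T) (S Z : {set T}).

Definition succ F (i : T) : T := if F i is Some j then j else i.

Definition tree_root F (i : T) : T := iter #|T| (succ F) i.

Definition rootset F : {set T} := [set i | F i == None].

Definition nreach F (x : T) : nat := #|[set y | connect (arcrel F) x y]|.

Lemma connect_iter_succ F x m : connect (arcrel F) x (iter m (succ F) x).
Proof.
elim: m => [|m IH] //=; apply: (connect_trans IH).
rewrite /succ; case E: (F _) => [j|] //.
by apply: connect1; rewrite /arcrel E.
Qed.

Lemma nreach_arc F i j : acyclic F -> F i = Some j -> (nreach F j < nreach F i)%N.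
Proof.
move=> /forallP acF Fij; apply: proper_card; apply/properP; split.
  apply/subsetP => y; rewrite !inE; apply: connect_trans.
  by apply: connect1; rewrite /arcrel Fij.
exists i; rewrite !inE ?connect0 //.
by have /forallP/(_ j) := acF i; rewrite /arcrel Fij eqxx.
Qed.

Lemma nreach_le F x : (nreach F x <= #|T|)%N.
Proof. exact: max_card. Qed.

Lemma acyclic_height F (h : T -> nat) :
  (forall i j, F i = Some j -> (h j < h i)%N) -> acyclic F.
Proof.
move=> hdec; apply/forallP => i; apply/forallP => j; apply/implyP => /eqP Fij.
apply/negP => /connectP [p pth Hl].
have : (h (last j p) <= h j)%N.
  elim: p j pth {Hl Fij} => //= c p IH j /andP [/eqP Fjc pth].
  exact: leq_trans (IH _ pth) (ltnW (hdec _ _ Fjc)).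
by rewrite -Hl; have := hdec _ _ Fij; lia.
Qed.

(* Every arc strictly decreases [nreach], which is at most #|T|. *)
Lemma tree_root_root F i : acyclic F -> F (tree_root F i) = None.
Proof.
move=> acF.
have descent m : F (iter m (succ F) i) != None ->
    (nreach F (iter m (succ F) i) + m <= nreach F i)%N.
  elim: m => [|m IH]; first by rewrite addn0.
  rewrite iterS; set a := iter m (succ F) i; rewrite /succ.
  case Fa: (F a) => [j|] /=; last by rewrite Fa.
  move=> _; have := nreach_arc acF Fa; rewrite Fa in IH; have := IH isT.
  by rewrite /a; lia.
case: (F (tree_root F i) =P None) => // /eqP nonroot; exfalso.
have := descent #|T| nonroot.
have : (0 < nreach F (iter #|T| (succ F) i))%N.
  by apply/card_gt0P; exists (iter #|T| (succ F) i); rewrite inE connect0.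
by have := nreach_le F i; lia.
Qed.

Lemma tree_root_id F r : F r = None -> tree_root F r = r.
Proof. by move=> Fr; apply: iter_fix; rewrite /succ Fr. Qed.

Lemma tree_root_arc F i j : acyclic F -> F i = Some j -> tree_root F j = tree_root F i.
Proof.
move=> acF Fij; have -> : j = succ F i by rewrite /succ Fij.
by rewrite /tree_root -iterSr iterS {1}/succ tree_root_root.
Qed.

Lemma weakrel_sym F : symmetric (weakrel F).
Proof. by move=> x y; rewrite /weakrel orbC. Qed.

Lemma connect_weakrel F x y :
  acyclic F -> connect (weakrel F) x y = (tree_root F x == tree_root F y).
Proof.
move=> acF; apply/idP/eqP => [xy | Exy].
  have clF : closed (weakrel F) [pred z | tree_root F z == tree_root F x].
    move=> a b; rewrite /weakrel /arcrel !inE => /orP [] /eqP Fab;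
      by rewrite (tree_root_arc acF Fab).
  by have := closed_connect clF xy; rewrite !inE eqxx => /esym/eqP.
have to_root z : connect (weakrel F) z (tree_root F z).
  apply: connect_sub (connect_iter_succ F z #|T|) => a b ab.
  by apply: connect1; rewrite /weakrel ab.
apply: connect_trans (to_root x) _.
by rewrite Exy (sym_connect_sym (weakrel_sym F)) to_root.
Qed.

Lemma ntrees_rootset F : acyclic F -> ntrees F = #|rootset F|.
Proof.
move=> acF; have sym := sym_connect_sym (weakrel_sym F).
have -> : ntrees F = #|[set x | roots (weakrel F) x]|.
  by apply: eq_card => x; rewrite !inE andbT.
have -> : [set x | roots (weakrel F) x] =
          [set fingraph.root (weakrel F) r | r in rootset F].
  apply/setP => x; rewrite inE; apply/idP/imsetP => [/eqP rx | [r _ ->]].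
    exists (tree_root F x); first by rewrite inE tree_root_root.
    rewrite -{1}rx; apply/(fingraph.rootP sym).
    by rewrite connect_weakrel // (tree_root_id (tree_root_root x acF)).
  exact: roots_root.
apply: card_in_imset => r1 r2; rewrite !inE => /eqP F1 /eqP F2.
by move/(fingraph.rootP sym); rewrite connect_weakrel // !tree_root_id // => /eqP.
Qed.

Lemma overrideE P Q S i : override P Q S i = if i \in S then Q i else P i.
Proof. by rewrite ffunE. Qed.

(* Z absorbs the Q-arcs leaving S and is P-closed, so ranking Z lowest, S above
   it and the rest on top yields a height function for the override. *)
Lemma acyclic_override P Q S Z :
  acyclic P -> acyclic Q ->
  (forall i j, i \in S -> Q i = Some j -> j \notin S -> j \in Z) ->
  (forall i j, i \in Z -> P i = Some j -> j \in Z) ->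
  [disjoint Z & S] ->
  acyclic (override P Q S).
Proof.
move=> acP acQ QSZ PZ dZS; pose M := #|T|.+1.
apply: (@acyclic_height _ (fun i => if i \in S then (nreach Q i + M)%N
   else if i \in Z then nreach P i else (nreach P i + M + M)%N)) => i j.
have := nreach_le P j; have := nreach_le Q j; rewrite overrideE.
case iS: (i \in S) => lePj leQj Fij.
  have := nreach_arc acQ Fij.
  by case jS: (j \in S); last rewrite (QSZ i j iS Fij) ?jS; lia.
have := nreach_arc acP Fij; case iZ: (i \in Z).
  have jZ := PZ i j iZ Fij.
  by rewrite jZ (disjointFr dZS jZ); lia.
by case: (j \in S); case: (j \in Z); lia.
Qed.

Lemma rootset_overrideI P Q S : rootset (override P Q S) :&: S = rootset Q :&: S.
Proof. by apply/setP => i; rewrite !inE overrideE; case: (i \in S); rewrite ?andbF. Qed.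

Lemma rootset_overrideD P Q S : rootset (override P Q S) :\: S = rootset P :\: S.
Proof. by apply/setP => i; rewrite !inE overrideE; case: (i \in S). Qed.

Lemma ntrees_override P Q S : acyclic (override P Q S) ->
  ntrees (override P Q S) = (#|rootset Q :&: S| + #|rootset P :\: S|)%N.
Proof.
move=> acO; rewrite ntrees_rootset // -(cardsID S).
by rewrite rootset_overrideI rootset_overrideD.
Qed.

Variable adj : rel T.

Lemma is_forest_acyclic F : is_forest adj F -> acyclic F.
Proof. by case/andP. Qed.

Lemma subgraph_override P Q S :
  subgraph_of_V adj P -> subgraph_of_V adj Q -> subgraph_of_V adj (override P Q S).
Proof.
move=> /forallP sP /forallP sQ; apply/forallP => i; rewrite overrideE.
by case: (i \in S); [apply: sQ | apply: sP].
Qed.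

Lemma is_forest_override P Q S Z :
  is_forest adj P -> is_forest adj Q ->
  (forall i j, i \in S -> Q i = Some j -> j \notin S -> j \in Z) ->
  (forall i j, i \in Z -> P i = Some j -> j \in Z) ->
  [disjoint Z & S] ->
  is_forest adj (override P Q S).
Proof.
move=> /andP [sP acP] /andP [sQ acQ] QSZ PZ dZS.
by rewrite /is_forest subgraph_override //= (acyclic_override acP acQ QSZ PZ dZS).
Qed.

Lemma is_forest_override_not_entering P Q S :
  is_forest adj P -> is_forest adj Q -> ~ enters P S ->
  is_forest adj (override P Q S).
Proof.
move=> fP fQ nP; apply: (is_forest_override (Z := ~: S)) => //.
- by move=> i j _ _; rewrite inE.
- move=> i j; rewrite !inE => iS Pij; apply/negP => jS.
  by apply: nP; exists i, j.
- by rewrite disjoints_subset.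
Qed.

Lemma ntrees_override_rootfree P Q S :
  acyclic P -> acyclic (override P Q S) ->
  (forall i, i \in S -> P i != None) -> (forall i, i \in S -> Q i != None) ->
  ntrees (override P Q S) = ntrees P.
Proof.
move=> acP acO nP nQ.
have noroot (G : sgraph T) :
    (forall i, i \in S -> G i != None) -> rootset G :&: S = set0.
  move=> nG; apply/setP => i; rewrite !inE.
  by case iS: (i \in S); rewrite ?andbF // andbT; apply/negbTE/nG.
rewrite ntrees_override // ntrees_rootset // -(cardsID S (rootset P)).
by rewrite !noroot.
Qed.

End Trees.

Section Weights.
Variables (T : finType) (R : realFieldType) (adj : rel T) (v : T -> T -> R).
Implicit Types (F G H P Q : sgraph T) (S X : {set T}).

Lemma UpsT_override P Q S :
  UpsT v (override P Q S) + Ups v P S = UpsT v P + Ups v Q S.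
Proof.
rewrite /UpsT /Ups !(big_mkcond (mem S)) !(big_mkcond (mem setT)) -!big_split /=.
apply: eq_bigr => i _; rewrite !inE overrideE.
by case: (i \in S); rewrite ?addr0 ?add0r // addrC.
Qed.

Lemma eq_Ups F G S : (forall i, i \in S -> F i = G i) -> Ups v F S = Ups v G S.
Proof. by move=> FG; apply: eq_bigr => i iS; rewrite FG. Qed.

Lemma Ups_setID F S X : Ups v F S = Ups v F (S :&: X) + Ups v F (S :\: X).
Proof. exact: big_setID. Qed.

(* [ole o x] means o <= x, where [None] stands for +oo. *)
Definition ole (o : option R) (x : R) : bool := if o is Some p then p <= x else false.

Lemma ole_ominr a b x : ole b x -> ole (omin a b) x.
Proof. by case: a; case: b => //= p q; rewrite ge_min orbC => ->. Qed.

Lemma ole_ominl a b x : a <= x -> ole (omin (Some a) b) x.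
Proof. by case: b => //= q; rewrite ge_min => ->. Qed.

Lemma big_omin_le (r : seq (sgraph T)) (p : pred (sgraph T)) (f : sgraph T -> R) G :
  G \in r -> p G -> ole (\big[@omin R/None]_(F <- r | p F) Some (f F)) (f G).
Proof.
elim: r => // F r IH; rewrite inE big_cons => /orP [/eqP <- -> | Gr pG].
  exact: ole_ominl.
by case: (p F); [apply: ole_ominr|]; apply: IH.
Qed.

Lemma phi_le k G : forest_k adj k G -> ole (phi adj v k) (UpsT v G).
Proof. by move=> fG; apply: big_omin_le; rewrite ?mem_index_enum. Qed.

Lemma tildeF_phi k G : tildeF adj v k G -> phi adj v k = Some (UpsT v G).
Proof. by case/andP=> _ /eqP. Qed.

Lemma tildeF_forest k G : tildeF adj v k G -> is_forest adj G.
Proof. by case/andP=> /andP []. Qed.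

Lemma tildeF_acyclic k G : tildeF adj v k G -> acyclic G.
Proof. by move/tildeF_forest/is_forest_acyclic. Qed.

Lemma tildeF_ntrees k G : tildeF adj v k G -> ntrees G = k.
Proof. by case/andP=> /andP [_ /eqP]. Qed.

Lemma tildeF_UpsT k F G : tildeF adj v k F -> is_forest adj G -> ntrees G = k ->
  UpsT v G = UpsT v F -> tildeF adj v k G.
Proof.
by move=> tF fG nG GF; rewrite /tildeF /forest_k fG nG GF (tildeF_phi tF) !eqxx.
Qed.

Lemma forest_kP k G : is_forest adj G -> ntrees G = k -> forest_k adj k G.
Proof. by move=> fG nG; rewrite /forest_k fG nG eqxx. Qed.

Lemma gap_cond_split k H G1 G2 : gap_cond adj v k -> tildeF adj v k H ->
  forest_k adj k.-1 G1 -> forest_k adj k.+1 G2 ->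
  UpsT v G1 + UpsT v G2 = UpsT v H + UpsT v H -> False.
Proof.
move=> + tH /phi_le le1 /phi_le le2 W12; rewrite /gap_cond (tildeF_phi tH).
case: (phi adj v k.-1) le1 => // a /= le1.
by case: (phi adj v k.+1) le2 => // c /= le2; lra.
Qed.

Lemma tildeF_balanced k H O1 O2 : gap_cond adj v k -> tildeF adj v k H ->
  is_forest adj O1 -> is_forest adj O2 ->
  (ntrees O1 + ntrees O2 = k + k)%N ->
  (k <= (ntrees O1).+1)%N -> (ntrees O1 <= k.+1)%N ->
  UpsT v O1 + UpsT v O2 = UpsT v H + UpsT v H -> tildeF adj v k O1.
Proof.
move=> gap tH fO1 fO2 n12 n1lo n1hi W12.
have W21 : UpsT v O2 + UpsT v O1 = UpsT v H + UpsT v H by rewrite addrC.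
case: (ltngtP (ntrees O1) k) => n1.
- by case: (gap_cond_split gap tH (forest_kP fO1 _) (forest_kP fO2 _) W12); lia.
- by case: (gap_cond_split gap tH (forest_kP fO2 _) (forest_kP fO1 _) W21); lia.
have n2 : ntrees O2 = k by lia.
have := phi_le (forest_kP fO1 n1); have := phi_le (forest_kP fO2 n2).
by rewrite (tildeF_phi tH) /= => le2 le1; apply: tildeF_UpsT tH fO1 n1 _; lra.
Qed.

End Weights.

Section Exchange.
Variables (T : finType) (R : realFieldType) (adj : rel T) (v : T -> T -> R).
Implicit Types (P Q : sgraph T) (S : {set T}).

Definition common_tree P Q (y : T) : {set T} :=
  [set i | (tree_root P i == tree_root P y) && (tree_root Q i == tree_root Q y)].

Lemma common_treeC P Q y : common_tree P Q y = common_tree Q P y.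
Proof. by apply/setP => i; rewrite !inE andbC. Qed.

Lemma is_forest_exchange P Q y : is_forest adj P -> is_forest adj Q ->
  is_forest adj (override P Q (common_tree P Q y)).
Proof.
move=> fP fQ; have acP := is_forest_acyclic fP; have acQ := is_forest_acyclic fQ.
apply: (is_forest_override (Z := [set i | tree_root P i != tree_root P y])) => //.
- move=> i j; rewrite !inE => /andP [_ /eqP iy] Qij.
  by rewrite (tree_root_arc acQ Qij) iy eqxx andbT.
- by move=> i j; rewrite !inE => iZ Pij; rewrite (tree_root_arc acP Pij).
- by apply/pred0P => i /=; rewrite !inE; case: eqP.
Qed.

Lemma card_rootset_common_tree P Q y :
  acyclic P -> (#|rootset P :&: common_tree P Q y| <= 1)%N.
Proof.
move=> acP; rewrite -(cards1 (tree_root P y)); apply/subset_leq_card/subsetP => i.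
by rewrite !inE => /andP [/eqP Pi /andP [/eqP <- _]]; rewrite tree_root_id.
Qed.

Lemma UpsT_exchange P Q S :
  UpsT v (override P Q S) + UpsT v (override Q P S) = UpsT v P + UpsT v Q.
Proof. by have := UpsT_override v P Q S; have := UpsT_override v Q P S; lra. Qed.

(* Each tree has a single root, so the two numbers of trees differ from k by
   opposite amounts of at most one. *)
Lemma tildeF_exchange k P Q y : gap_cond adj v k ->
  tildeF adj v k P -> tildeF adj v k Q ->
  tildeF adj v k (override P Q (common_tree P Q y)).
Proof.
move=> gap tP tQ; set S := common_tree P Q y.
have [acP acQ] := (tildeF_acyclic tP, tildeF_acyclic tQ).
have fPQ : is_forest adj (override P Q S).
  exact: is_forest_exchange (tildeF_forest tP) (tildeF_forest tQ).
have fQP : is_forest adj (override Q P S).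
  rewrite /S common_treeC.
  exact: is_forest_exchange (tildeF_forest tQ) (tildeF_forest tP).
have rP : (#|rootset P :&: S| <= 1)%N by apply: card_rootset_common_tree.
have rQ : (#|rootset Q :&: S| <= 1)%N.
  by rewrite /S common_treeC; apply: card_rootset_common_tree.
have nP := tildeF_ntrees tP; have nQ := tildeF_ntrees tQ.
rewrite ntrees_rootset // -(cardsID S) in nP.
rewrite ntrees_rootset // -(cardsID S) in nQ.
have nPQ := ntrees_override (is_forest_acyclic fPQ).
have nQP := ntrees_override (is_forest_acyclic fQP).
apply: (tildeF_balanced gap tP fPQ fQP); rewrite ?nPQ ?nQP; try lia.
by rewrite UpsT_exchange; have := tildeF_phi tP; rewrite (tildeF_phi tQ) => -[->].
Qed.

End Exchange.

Section Atoms.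
Variables (T : finType) (R : realFieldType) (adj : rel T) (v : T -> T -> R).
Variable k : nat.

Lemma in_AkI A B : in_Ak adj v k A -> in_Ak adj v k B -> in_Ak adj v k (A :&: B).
Proof.
move=> inA inB S algS genS; have [_ algC algU] := algS.
rewrite -[A :&: B]setCK setCI.
by apply/algC/algU; apply/algC; [apply: inA | apply: inB].
Qed.

Lemma gen_in_Ak B : gen adj v k B -> in_Ak adj v k B.
Proof. by move=> genB S _; apply. Qed.

Lemma atom_tree_root U G u x : atom adj v k U -> tildeF adj v k G ->
  u \in U -> x \in U -> tree_root G x = tree_root G u.
Proof.
move=> [inU _ minU] tG uU xU; have acG := tildeF_acyclic tG.
have genB : gen adj v k (tree_set G u) by exists G, u.
have [U0 | UB] := minU _ (in_AkI inU (gen_in_Ak genB)) (subsetIl _ _).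
  by move: (in_set0 u); rewrite -U0 !inE uU connect0.
have : x \in U :&: tree_set G u by rewrite UB.
by rewrite !inE connect_weakrel // => /andP [_ /eqP].
Qed.

(* Otherwise the sets not separating y from u form an algebra containing all
   the generators, hence U, although it separates them. *)
Lemma atom_separated U u y : atom adj v k U -> u \in U -> y \notin U ->
  exists2 G, tildeF adj v k G & tree_root G y != tree_root G u.
Proof.
move=> [inU _ _] uU yU.
have [/existsP [G /andP [tG sep]] | /existsPn noSep] :=
  boolP [exists G, tildeF adj v k G && (tree_root G y != tree_root G u)].
  by exists G.
pose S := [set A : {set T} | (y \in A) == (u \in A)].
have algS : is_algebra S.
  split; first by rewrite !inE.
    by move=> A; rewrite !inE => /eqP ->.
  by move=> A B; rewrite !inE => /eqP -> /eqP ->.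
have : U \in S.
  apply: (inU S algS) => _ [G [x [tG ->]]]; have acG := tildeF_acyclic tG.
  have := noSep G; rewrite tG negbK => /eqP Gyu.
  by rewrite !inE !connect_weakrel // Gyu.
by rewrite inE uU (negbTE yU).
Qed.

End Atoms.

Definition union_of_components (T : finType) (F : sgraph T) (U X : {set T}) : Prop :=
  X \subset U /\
  forall i j, i \in U -> j \in U -> F i = Some j -> (i \in X) = (j \in X).

Definition entering (T : finType) (H : sgraph T) (X : {set T}) : {set T} :=
  [set i | (i \notin X) && (if H i is Some j then j \in X else false)].

Lemma entering_set0 (T : finType) (H : sgraph T) (X : {set T}) :
  entering H X = set0 -> ~ enters H X.
Proof.
move=> E0 [i [j [Hij jX iX]]].
have : i \in entering H X by rewrite inE iX Hij jX.
by rewrite E0 inE.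
Qed.

Section Components.
Variables (T : finType) (R : realFieldType) (adj : rel T) (v : T -> T -> R).
Variables (k : nat) (U : {set T}).
Hypotheses (gap : gap_cond adj v k) (atomU : atom adj v k U).
Implicit Types (F G H : sgraph T) (X : {set T}).

Lemma union_of_components_setD F X :
  union_of_components F U X -> union_of_components F U (U :\: X).
Proof.
move=> [_ clX]; split=> [|i j iU jU Fij]; first exact: subsetDl.
by rewrite !inE iU jU (clX i j iU jU Fij).
Qed.

Lemma union_of_components_full F : union_of_components F U U.
Proof. by split=> // i j ->. Qed.

(* An arc entering X from outside U is removed by exchanging with an optimal
   forest G separating its tail from U; the exchanged part avoids U, and in G
   nothing of that part points into X since X lies in the G-tree of U. *)
Lemma entering_decrease F X H :
  union_of_components F U X -> tildeF adj v k H ->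
  (forall i, i \in U -> H i = F i) -> entering H X != set0 ->
  exists H', [/\ tildeF adj v k H', (forall i, i \in U -> H' i = F i) &
                 (#|entering H' X| < #|entering H X|)%N].
Proof.
move=> [XU clX] tH HF /set0Pn [y yE].
move: (yE); rewrite inE => /andP [yX]; case Hy: (H y) => [z|] // zX.
have zU := subsetP XU z zX.
have yU : y \notin U.
  by apply: contra yX => yU; rewrite (clX y z yU zU) // -HF.
have [G tG sep] := atom_separated atomU zU yU; have acG := tildeF_acyclic tG.
have GX i : i \in X -> tree_root G i = tree_root G z.
  by move=> iX; apply: atom_tree_root atomU tG zU (subsetP XU i iX).
set S := common_tree H G y.
exists (override H G S); split; first exact: tildeF_exchange.
  move=> i iU; rewrite overrideE inE (atom_tree_root atomU tG zU iU).
  by rewrite [tree_root G z == _]eq_sym (negbTE sep) andbF HF.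
apply: proper_card; apply/properP; split.
  apply/subsetP => i; rewrite !inE overrideE => /andP [iX].
  case iS: (i \in S); last by rewrite iX.
  case Gi: (G i) => [j|] // jX; case/negP: sep; move: iS.
  by rewrite inE -(tree_root_arc acG Gi) (GX j jX) => /andP [_ /eqP ->].
exists y => //; have yS : y \in S by rewrite inE !eqxx.
rewrite !inE overrideE yX yS; case Gy: (G y) => [j|] //.
by apply/negP => jX; case/negP: sep; rewrite -(tree_root_arc acG Gy) (GX j jX).
Qed.

Lemma exists_tildeF_not_entering F X :
  union_of_components F U X -> tildeF adj v k F ->
  exists H, [/\ tildeF adj v k H, (forall i, i \in U -> H i = F i) & ~ enters H X].
Proof.
move=> compX tF.
suff bounded n H : tildeF adj v k H -> (forall i, i \in U -> H i = F i) ->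
    (#|entering H X| <= n)%N ->
    exists H, [/\ tildeF adj v k H, (forall i, i \in U -> H i = F i) & ~ enters H X].
  exact: (bounded _ F).
elim: n H => [|n IH] H tH HF sizeE.
  by exists H; split=> //; apply: entering_set0; apply/eqP; rewrite -cards_eq0 -leqn0.
have [/entering_set0 nH | E] := eqVneq (entering H X) set0; first by exists H.
have [H' [tH' H'F lt]] := entering_decrease compX tH HF E.
by apply: IH tH' H'F _; rewrite -ltnS; apply: leq_trans lt sizeE.
Qed.

Hypothesis unlabU : unlabeled adj v k U.

Lemma Ups_union_of_components_le F X G :
  union_of_components F U X -> tildeF adj v k F ->
  is_forest adj G -> (forall i, i \in X -> G i != None) ->
  Ups v F X <= Ups v G X /\
  (Ups v G X = Ups v F X ->
     exists F', tildeF adj v k F' /\ (forall i, i \in X -> G i = F' i)).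
Proof.
move=> compX tF fG GX.
have [H [tH HF nH]] := exists_tildeF_not_entering compX tF.
have HXF i : i \in X -> H i = F i by move=> iX; apply/HF/(subsetP compX.1).
have HX i : i \in X -> H i != None.
  by move=> iX; rewrite HXF //; exact: unlabU tF (subsetP compX.1 i iX).
have fO := is_forest_override_not_entering (tildeF_forest tH) fG nH.
have nO := ntrees_override_rootfree (tildeF_acyclic tH) (is_forest_acyclic fO) HX GX.
rewrite (tildeF_ntrees tH) in nO.
have := phi_le v (forest_kP fO nO); rewrite (tildeF_phi tH) /= => le.
have W := UpsT_override v H G X; rewrite (eq_Ups v HXF) in W.
split=> [|GF]; first lra.
exists (override H G X); split; first by apply: tildeF_UpsT tH fO nO _; lra.
by move=> i iX; rewrite overrideE iX.
Qed.

(* F is no heavier than G on X and on U :\: X, and G no heavier than F on U. *)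
Lemma Ups_component_eq F G X : union_of_components F U X ->
  tildeF adj v k F -> tildeF adj v k G -> Ups v G X = Ups v F X.
Proof.
move=> compX tF tG; have XU := compX.1.
have GU i : i \in U -> G i != None by exact: unlabU tG.
have FU i : i \in U -> F i != None by exact: unlabU tF.
have [leX _] := Ups_union_of_components_le compX tF (tildeF_forest tG)
  (fun i iX => GU i (subsetP XU i iX)).
have [leUX _] := Ups_union_of_components_le (union_of_components_setD compX) tF
  (tildeF_forest tG) (fun i iUX => GU i (subsetP (subsetDl U X) i iUX)).
have [leU _] := Ups_union_of_components_le (union_of_components_full G) tG
  (tildeF_forest tF) FU.
have := Ups_setID v F U X; have := Ups_setID v G U X.
by rewrite (setIidPr XU); lra.
Qed.

Lemma tildeF_override F G X : union_of_components F U X ->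
  tildeF adj v k F -> tildeF adj v k G -> is_forest adj (override F G X) ->
  tildeF adj v k (override F G X).
Proof.
move=> compX tF tG fO.
have XU i : i \in X -> i \in U := subsetP compX.1 i.
have nO := ntrees_override_rootfree (tildeF_acyclic tF) (is_forest_acyclic fO)
  (fun i iX => unlabU tF (XU i iX)) (fun i iX => unlabU tG (XU i iX)).
apply: (tildeF_UpsT tF fO); first by rewrite nO (tildeF_ntrees tF).
by have := UpsT_override v F G X; rewrite (Ups_component_eq compX tF tG); lra.
Qed.

End Components.

Lemma is_component_union (T : finType) (F : sgraph T) (U X : {set T}) :
  is_component F U X -> union_of_components F U X.
Proof.
move=> [x xU ->]; split.
  apply/subsetP => y; rewrite inE => /connectP [p pth ->].
  elim: p x xU pth => //= c p IH a aU /andP [/and3P [_ cU _] pth].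
  exact: IH pth.
move=> i j iU jU Fij; rewrite !inE.
have ij : indrel F U i j by rewrite /indrel iU jU /weakrel /arcrel Fij eqxx.
have ji : indrel F U j i by rewrite /indrel iU jU /weakrel /arcrel Fij eqxx orbT.
by apply/idP/idP => h; apply: connect_trans h (connect1 _).
Qed.

Theorem theorem3 (T : finType) (R : realFieldType) (adj : rel T)
    (v : T -> T -> R) (k : nat) (F : sgraph T) (U X : {set T}) :
  (exists Tr : sgraph T, forest_k adj 1 Tr) ->
  (1 <= k <= #|T| - 1)%N ->
  gap_cond adj v k ->
  tildeF adj v k F ->
  atom adj v k U ->
  unlabeled adj v k U ->
  is_component F U X ->
  (* (1) *)
  (exists H : sgraph T, [/\ tildeF adj v k H,
      (forall i, i \in X -> H i = F i) & ~ enters H X]) /\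
  (* (2) *)
  (forall G : sgraph T, tildeF adj v k G ->
     [/\ Ups v G X = Ups v F X,
         (~ enters F X -> is_forest adj (override F G X)) &
         (is_forest adj (override F G X) -> tildeF adj v k (override F G X))]) /\
  (* (3) *)
  (forall G : sgraph T, is_forest adj G ->
     (forall i, i \in X -> G i != None) ->
     Ups v F X <= Ups v G X /\
     (Ups v G X = Ups v F X ->
        exists F' : sgraph T, tildeF adj v k F' /\
          (forall i, i \in X -> G i = F' i))).
Proof.
move=> _ _ gap tF atomU unlabU /is_component_union compX.
split.
  have [H [tH HF nH]] := exists_tildeF_not_entering gap atomU compX tF.
  by exists H; split=> // i /(subsetP compX.1); apply: HF.
split=> [G tG | G fG GX].
  split; first exact: (Ups_component_eq gap atomU unlabU compX tF tG).
    exact: is_forest_override_not_entering (tildeF_forest tF) (tildeF_forest tG).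
  exact: (tildeF_override gap atomU unlabU compX tF tG).
exact: (Ups_union_of_components_le gap atomU unlabU compX tF fG GX).
Qed.
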